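(* In the finite-inventory setting described in the context, for every season $n$ and period $t\in\{1,\dots,T\}$, \[ |\Delta_t^n|\le 2\|\widehat V_n-V^*\|_\infty+(T-t+1)\,R_{\max}\,\delta_n . \]
   Context: States are $x=(s,t)$ with $s\in\{0,\dots,C\}$, $t\in\{1,\dots,T+1\}$; $\mathcal{X}$ is the set of all states with $t\le T+1$. From state $(s,t)$, a price $p\in[p_l,p_h]$ ($0<p_l<p_h$) yields sales $q\in\{0,\dots,s\}$ with true probability $P(q\mid s,p)$, reward $pq$, next state $(s-q,t+1)$. $R_{\max}=p_hC$. $V^*(s,T+1)=0$, $V^*(s,t)=\max_{p}\sum_{q=0}^sP(q\mid s,p)[pq+V^*(s-q,t+1)]$. For season $n$, $\widehat P_n(\cdot\mid s,p)$ is an estimated sales distribution on $\{0,\dots,s\}$ (obtained by discretizing a Gaussian with the GP posterior mean and variance at $p$), $\widehat V_n(s,T+1)=0$, $\widehat V_n(s,t)=\max_{p}\sum_{q=0}^s\widehat P_n(q\mid s,p)[pq+\widehat V_n(s-q,t+1)]$, and the policy $\psi$ in season $n$ selects at $(s,t)$ a price attaining this maximum. $\|\widehat V_n-V^*\|_\infty=\max_{x\in\mathcal{X}}|\widehat V_n(x)-V^*(x)|$, and $\delta_n=\sup_{(s,t)\in\mathcal{X},\,p\in[p_l,p_h]}\|\widehat P_n(\cdot\mid s,p)-P(\cdot\mid s,p)\|_1$. In season $n$, the random states $X_t^n=(S_t^n,t)$ evolve under $P$ with prices from $\psi$, starting at $X_1^n=(C,1)$, with rewards $r_t^n$; $\mathbb{E}_\psi$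 is the corresponding expectation, and $\Delta_t^n=\mathbb{E}_\psi\big[V^*(X_t^n)-\mathbb{E}_\psi[r_t^n+V^*(X_{t+1}^n)\mid X_t^n]\big]$. *)

From mathcomp Require Import all_boot all_order all_algebra.
From mathcomp Require Import boolp classical_sets reals.
Set Implicit Arguments. Unset Strict Implicit. Unset Printing Implicit Defensive.
Import Order.TTheory GRing.Theory Num.Theory.
Local Open Scope classical_set_scope.
Local Open Scope ring_scope.

(* A sales kernel K : q -> s -> p -> R, K q s p = probability of selling q
   units when s units are on hand and price p is posted. *)

(* One-step value of posting price p in inventory s, with continuation W
   (W s' = value of the next state (s', t+1)):
   sum_{q=0}^s K(q|s,p) [p q + W(s - q)]. *)
Definition Qval (R : realType) (K : nat -> nat -> R -> R) (W : nat -> R)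
  (s : nat) (p : R) : R :=
  \sum_(q < s.+1) K q s p * (p * q%:R + W (s - q)%N).

(* Value with k periods remaining: Bellman recursion, max (= sup) over
   prices in [pl, ph]. *)
Fixpoint Vrem (R : realType) (pl ph : R) (K : nat -> nat -> R -> R)
  (k : nat) (s : nat) : R :=
  match k with
  | 0 => 0
  | k'.+1 => sup [set x | exists2 p : R, pl <= p <= ph &
                          x = Qval K (Vrem pl ph K k') s p]
  end.

(* V(s,t) for t in {1,...,T+1}: V(s,T+1) = 0 and the Bellman recursion. *)
Definition Vfun (R : realType) (T : nat) (pl ph : R) (K : nat -> nat -> R -> R)
  (s t : nat) : R := Vrem pl ph K (T.+1 - t) s.

Definition is_sales_kernel (R : realType) (C : nat) (pl ph : R)
  (K : nat -> nat -> R -> R) : Prop :=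
  forall (s : nat) (p : R), (s <= C)%N -> pl <= p <= ph ->
    (forall q : nat, (q <= s)%N -> 0 <= K q s p) /\
    \sum_(q < s.+1) K q s p = 1.

Definition greedy_policy (R : realType) (C T : nat) (pl ph : R)
  (Khat : nat -> nat -> R -> R) (psi : nat -> nat -> R) : Prop :=
  forall s t : nat, (s <= C)%N -> (1 <= t <= T)%N ->
    pl <= psi s t <= ph /\
    Qval Khat (fun s' => Vfun T pl ph Khat s' t.+1) s (psi s t)
      = Vfun T pl ph Khat s t.

(* Law of S_{k+1} for the inventory chain run under the true kernel K with
   prices psi, started at S_1 = C: muk k s = Pr(S_{k+1} = s). *)
Fixpoint muk (R : realType) (C : nat) (K : nat -> nat -> R -> R)
  (psi : nat -> nat -> R) (k : nat) : nat -> R :=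
  match k with
  | 0 => fun s => (s == C)%:R
  | k'.+1 => fun s' =>
      \sum_(s < C.+1) muk C K psi k' s *
        (if (s' <= s)%N then K (s - s')%N s (psi s k'.+1) else 0)
  end.

Definition state_law (R : realType) (C : nat) (K : nat -> nat -> R -> R)
  (psi : nat -> nat -> R) (t : nat) : nat -> R := muk C K psi t.-1.

(* Delta_t = E_psi[ V*(X_t) - E_psi[r_t + V*(X_{t+1}) | X_t] ], where
   E[r_t + V*(X_{t+1}) | X_t = (s,t)] = Qval K V*(.,t+1) s (psi s t). *)
Definition Delta (R : realType) (C T : nat) (pl ph : R)
  (K : nat -> nat -> R -> R) (psi : nat -> nat -> R) (t : nat) : R :=
  \sum_(s < C.+1) state_law C K psi t s *
    (Vfun T pl ph K s t - Qval K (fun s' => Vfun T pl ph K s' t.+1) s (psi s t)).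

(* sup-norm over X = {0..C} x {1..T+1} *)
Definition supnorm (R : realType) (C T : nat) (V W : nat -> nat -> R) : R :=
  \big[Num.max/0]_(s < C.+1) \big[Num.max/0]_(t < T.+1)
     `|V s t.+1 - W s t.+1|.

Definition kernel_dist (R : realType) (C T : nat) (pl ph : R)
  (K Khat : nat -> nat -> R -> R) : R :=
  sup [set d | exists s t : nat, exists2 p : R,
         [/\ (s <= C)%N, (1 <= t <= T.+1)%N & pl <= p <= ph] &
         d = \sum_(q < s.+1) `|Khat q s p - K q s p|].

From mathcomp Require Import all_boot all_order all_algebra.
From mathcomp Require Import boolp classical_sets reals.
From mathcomp Require Import ring.
Set Implicit Arguments.
Unset Strict Implicit.
Unset Printing Implicit Defensive.
Import Order.TTheory GRing.Theory Num.Theory.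
Local Open Scope classical_set_scope.
Local Open Scope ring_scope.

(* Write Vs for the true value function, Vh for the one computed from the
   estimated kernel Ph, and Q_K(W)(s,p) for the one-step value [Qval].  Since
   psi is greedy for Ph, Vh(s,t) = Q_Ph(Vh)(s,psi), so the Bellman error of psi
   at (s,t) splits as
     Vs(s,t) - Q_P(Vs)(s,psi) = (Vs - Vh)(s,t) + (Q_Ph - Q_P)(Vh)(s,psi)
                                + Q_P(Vh - Vs)(s,psi).
   The first and last terms are at most ||Vh - Vs||; the middle one is at most
   ||Ph - P||_1 times a bound on reward plus continuation, which is
   (T - t + 1) R_max because at most T - t periods remain after t.  Delta_t
   averages this pointwise bound over the law of X_t. *)

Section WeightedSums.

Variables (R : numDomainType) (I : finType) (w : I -> R).
Hypotheses (w_ge0 : forall i, 0 <= w i) (w_sum1 : \sum_i w i = 1).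

Lemma wsum_le (f : I -> R) (M : R) :
  (forall i, f i <= M) -> \sum_i w i * f i <= M.
Proof.
move=> fM; apply: le_trans (ler_sum _ (fun i _ => ler_wpM2l (w_ge0 i) (fM i))) _.
by rewrite -mulr_suml w_sum1 mul1r.
Qed.

Lemma wsum_ge (f : I -> R) (L : R) :
  (forall i, L <= f i) -> L <= \sum_i w i * f i.
Proof.
move=> Lf; apply: le_trans (ler_sum _ (fun i _ => ler_wpM2l (w_ge0 i) (Lf i))).
by rewrite -mulr_suml w_sum1 mul1r.
Qed.

Lemma norm_wsum_le (f : I -> R) (M : R) :
  (forall i, `|f i| <= M) -> `|\sum_i w i * f i| <= M.
Proof.
move=> fM; apply: le_trans (ler_norm_sum _ _ _) _.
under eq_bigr => i _ do rewrite normrM (ger0_norm (w_ge0 i)).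
exact: wsum_le.
Qed.

End WeightedSums.

Lemma sup_bounds (R : realType) (S : set R) (L M : R) :
  S !=set0 -> (forall x, S x -> L <= x <= M) -> L <= sup S <= M.
Proof.
move=> [x Sx] SLM; have S_ub : has_ubound S by exists M => y /SLM /andP[].
apply/andP; split; last by apply: ge_sup; [exists x | move=> y /SLM /andP[]].
have /andP[Lx _] := SLM x Sx.
by apply: le_trans Lx (sup_upper_bound _ Sx); split; [exists x|].
Qed.

Section OneStepValue.

Variables (R : realType) (K : nat -> nat -> R -> R) (s : nat) (p : R).
Hypotheses (K_ge0 : forall q, (q <= s)%N -> 0 <= K q s p)
           (K_sum1 : \sum_(q < s.+1) K q s p = 1).

Let K_ge0_ord (q : 'I_s.+1) : 0 <= K q s p := K_ge0 (ltn_ord q).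

Lemma Qval_bounds (W : nat -> R) (L M : R) :
  (forall q, (q <= s)%N -> L <= p * q%:R + W (s - q)%N <= M) ->
  L <= Qval K W s p <= M.
Proof.
move=> LM; rewrite /Qval; apply/andP; split.
- by apply: (wsum_ge K_ge0_ord K_sum1) => q; case/andP: (LM q (ltn_ord q)).
- by apply: (wsum_le K_ge0_ord K_sum1) => q; case/andP: (LM q (ltn_ord q)).
Qed.

Lemma norm_QvalB_le (W W' : nat -> R) (e : R) :
  (forall s', (s' <= s)%N -> `|W s' - W' s'| <= e) ->
  `|Qval K W s p - Qval K W' s p| <= e.
Proof.
move=> WW'; rewrite /Qval -sumrB.
under eq_bigr => q _ do rewrite -mulrBr (addrC (p * _)) addrKA.
by apply: (norm_wsum_le K_ge0_ord K_sum1) => q; apply/WW'/leq_subr.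
Qed.

End OneStepValue.

Lemma norm_QvalB_kernel_le (R : realType) (K1 K2 : nat -> nat -> R -> R)
    (W : nat -> R) (s : nat) (p M : R) :
  (forall q, (q <= s)%N -> `|p * q%:R + W (s - q)%N| <= M) ->
  `|Qval K1 W s p - Qval K2 W s p|
    <= M * \sum_(q < s.+1) `|K1 q s p - K2 q s p|.
Proof.
move=> rM; rewrite /Qval -sumrB mulr_sumr.
apply: le_trans (ler_norm_sum _ _ _) (ler_sum _ _) => q _.
by rewrite -mulrBl normrM mulrC ler_wpM2r // rM // -ltnS.
Qed.

Lemma Vrem_bounds (R : realType) (C : nat) (pl ph : R)
    (K : nat -> nat -> R -> R) :
  0 <= pl -> pl <= ph -> is_sales_kernel C pl ph K ->
  forall k s, (s <= C)%N -> 0 <= Vrem pl ph K k s <= k%:R * (ph * C%:R).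
Proof.
move=> pl_ge0 pl_le_ph HK; elim=> [|k IHk] s sC /=; first by rewrite mul0r lexx.
apply: sup_bounds.
  by exists (Qval K (Vrem pl ph K k) s pl); exists pl; rewrite ?lexx ?pl_le_ph.
move=> _ [p /[dup] p_range /andP[plp pph] ->].
have [K_ge0 K_sum1] := HK s p sC p_range.
apply: Qval_bounds => // q qs.
have /andP[W_ge0 W_le] := IHk (s - q)%N (leq_trans (leq_subr _ _) sC).
have p_ge0 : 0 <= p := le_trans pl_ge0 plp.
rewrite addr_ge0 ?mulr_ge0 //= -addn1 natrD mulrDl mul1r addrC lerD //.
by rewrite ler_pM // ler_nat (leq_trans qs).
Qed.

Lemma l1_dist_le2 (R : realType) (K1 K2 : nat -> nat -> R -> R)
    (s : nat) (p : R) :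
  (forall q, (q <= s)%N -> 0 <= K1 q s p) -> \sum_(q < s.+1) K1 q s p = 1 ->
  (forall q, (q <= s)%N -> 0 <= K2 q s p) -> \sum_(q < s.+1) K2 q s p = 1 ->
  \sum_(q < s.+1) `|K1 q s p - K2 q s p| <= 2.
Proof.
move=> K1_ge0 K1_sum1 K2_ge0 K2_sum1.
apply: (@le_trans _ _ (\sum_(q < s.+1) (K1 q s p + K2 q s p))).
  apply: ler_sum => q _; apply: le_trans (ler_normB _ _) _.
  by rewrite !ger0_norm ?K1_ge0 ?K2_ge0 // -ltnS.
by rewrite big_split /= K1_sum1 K2_sum1.
Qed.

Lemma le_kernel_dist (R : realType) (C T : nat) (pl ph : R)
    (K Kh : nat -> nat -> R -> R) (s t : nat) (p : R) :
  is_sales_kernel C pl ph K -> is_sales_kernel C pl ph Kh ->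
  (s <= C)%N -> (1 <= t <= T.+1)%N -> pl <= p <= ph ->
  \sum_(q < s.+1) `|Kh q s p - K q s p| <= kernel_dist C T pl ph K Kh.
Proof.
move=> HK HKh sC tT p_range; apply: sup_upper_bound; last by exists s, t, p.
split; first by exists (\sum_(q < s.+1) `|Kh q s p - K q s p|), s, t, p.
exists 2 => _ [s' [t' [p' [s'C _ p'_range] ->]]].
have [K_ge0 K_sum1] := HK s' p' s'C p'_range.
have [Kh_ge0 Kh_sum1] := HKh s' p' s'C p'_range.
exact: l1_dist_le2.
Qed.

Lemma le_supnorm (R : realType) (C T : nat) (V W : nat -> nat -> R)
    (s t : nat) :
  (s <= C)%N -> (1 <= t <= T.+1)%N -> `|V s t - W s t| <= supnorm C T V W.
Proof.
move=> sC /andP[t_ge1 tT]; rewrite -(prednK t_ge1) in tT *.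
apply: le_trans (le_bigmax _ _ (Ordinal (sC : s < C.+1)%N)).
exact: le_trans (le_bigmax _ _ (Ordinal tT)).
Qed.

Lemma sum_if_leq_sub (R : realType) (C s : nat) (f : nat -> R) : (s <= C)%N ->
  \sum_(s' < C.+1) (if (s' <= s)%N then f (s - s')%N else 0)
    = \sum_(q < s.+1) f q.
Proof.
move=> sC; rewrite -big_mkcond /=.
rewrite -(big_ord_widen C.+1 (fun i => f (s - i)%N) (sC : s < C.+1)%N).
rewrite (reindex_inj rev_ord_inj) /=; apply: eq_bigr => i _.
by rewrite subSS subKn // -ltnS.
Qed.

Lemma muk_distr (R : realType) (C T : nat) (pl ph : R)
    (K : nat -> nat -> R -> R) (psi : nat -> nat -> R) :
  is_sales_kernel C pl ph K ->
  (forall s j, (s <= C)%N -> (1 <= j <= T)%N -> pl <= psi s j <= ph) ->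
  forall k, (k <= T)%N ->
  (forall s, 0 <= muk C K psi k s) /\ \sum_(s < C.+1) muk C K psi k s = 1.
Proof.
move=> HK psi_range; elim=> [|k IHk] kT /=.
  split=> [s|]; first by rewrite ler0n.
  rewrite (bigD1 ord_max) //= eqxx big1 ?addr0 // => i /negbTE.
  by rewrite -val_eqE /= => ->.
have [mu_ge0 mu_sum1] := IHk (ltnW kT).
have K_distr (s : 'I_C.+1) :=
  HK s (psi s k.+1) (ltnSE (ltn_ord s)) (psi_range s k.+1 (ltnSE (ltn_ord s)) kT).
split=> [s'|].
  apply: sumr_ge0 => s _; rewrite mulr_ge0 //.
  by case: ifP => // _; rewrite (K_distr s).1 ?leq_subr.
rewrite exchange_big /= -mu_sum1; apply: eq_bigr => s _.
rewrite -mulr_sumr (sum_if_leq_sub (fun q => K q s _)) ?(K_distr s).2 ?mulr1 //.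
by rewrite -ltnS.
Qed.

Section BellmanError.

Variables (R : realType) (C T : nat) (pl ph : R) (P Ph : nat -> nat -> R -> R)
  (psi : nat -> nat -> R).
Hypotheses (pl_ge0 : 0 <= pl) (pl_le_ph : pl <= ph)
  (P_kernel : is_sales_kernel C pl ph P)
  (Ph_kernel : is_sales_kernel C pl ph Ph)
  (psi_greedy : greedy_policy C T pl ph Ph psi).

Local Notation Vs := (Vfun T pl ph P).
Local Notation Vh := (Vfun T pl ph Ph).

Lemma norm_reward_Vh_le (s t : nat) (p : R) :
  (s <= C)%N -> (t <= T)%N -> pl <= p <= ph -> forall q, (q <= s)%N ->
  `|p * q%:R + Vh (s - q)%N t.+1| <= (T.+1 - t)%:R * (ph * C%:R).
Proof.
move=> sC tT /andP[plp pph] q qs; have p_ge0 : 0 <= p := le_trans pl_ge0 plp.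
have /andP[Vh_ge0 Vh_le] := Vrem_bounds pl_ge0 pl_le_ph Ph_kernel (T.+1 - t.+1)
  (leq_trans (leq_subr q s) sC).
rewrite ger0_norm ?addr_ge0 ?mulr_ge0 // subSn // -nat1r mulrDl mul1r lerD //.
by rewrite ler_pM // ler_nat (leq_trans qs).
Qed.

Lemma bellman_error_le (s t : nat) : (s <= C)%N -> (1 <= t <= T)%N ->
  `|Vs s t - Qval P (Vs ^~ t.+1) s (psi s t)|
    <= 2 * supnorm C T Vh Vs
       + (T.+1 - t)%:R * (ph * C%:R) * kernel_dist C T pl ph P Ph.
Proof.
move=> sC /[dup] t_range /andP[t_ge1 tT].
have [p_range Vh_greedy] := psi_greedy sC t_range.
have [P_ge0 P_sum1] := P_kernel sC p_range.
set p := psi s t in p_range Vh_greedy *.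
have t_le : (1 <= t <= T.+1)%N by rewrite t_ge1 ltnW.
have tS_le : (1 <= t.+1 <= T.+1)%N by rewrite ltnS.
have -> : Vs s t - Qval P (Vs ^~ t.+1) s p =
    (Vs s t - Vh s t) + (Qval Ph (Vh ^~ t.+1) s p - Qval P (Vh ^~ t.+1) s p)
    + (Qval P (Vh ^~ t.+1) s p - Qval P (Vs ^~ t.+1) s p).
  by rewrite -Vh_greedy; ring.
set N := supnorm C T Vh Vs; set MD := _ * kernel_dist _ _ _ _ _ _.
rewrite (_ : 2 * N + MD = N + MD + N); last by ring.
apply: le_trans (ler_normD _ _) (lerD _ _).
  apply: le_trans (ler_normD _ _) (lerD _ _); first by rewrite distrC le_supnorm.
  apply: le_trans (norm_QvalB_kernel_le Ph P (norm_reward_Vh_le sC tT p_range)) _.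
  rewrite /MD ler_wpM2l ?mulr_ge0 ?(le_trans pl_ge0 pl_le_ph) //.
  exact: le_kernel_dist P_kernel Ph_kernel sC t_le p_range.
apply: (norm_QvalB_le P_ge0 P_sum1) => s' s's.
by rewrite le_supnorm ?(leq_trans s's sC).
Qed.

End BellmanError.

Theorem lemma3 (R : realType) (C T : nat) (pl ph : R)
  (P : nat -> nat -> R -> R) (Phat : nat -> nat -> nat -> R -> R)
  (psi : nat -> nat -> nat -> R) (n t : nat) :
  0 < pl -> pl < ph ->
  is_sales_kernel C pl ph P ->
  is_sales_kernel C pl ph (Phat n) ->
  greedy_policy C T pl ph (Phat n) (psi n) ->
  (1 <= t <= T)%N ->
  `| Delta C T pl ph P (psi n) t |
    <= 2 * supnorm C T (Vfun T pl ph (Phat n)) (Vfun T pl ph P)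
       + (T.+1 - t)%:R * (ph * C%:R) * kernel_dist C T pl ph P (Phat n).
Proof.
move=> /ltW pl_ge0 /ltW pl_le_ph HP HPh psi_greedy /[dup] t_range /andP[_ tT].
have psi_range s j : (s <= C)%N -> (1 <= j <= T)%N -> pl <= psi n s j <= ph.
  by move=> sC jT; case: (psi_greedy s j sC jT).
have [mu_ge0 mu_sum1] := muk_distr HP psi_range (leq_trans (leq_pred t) tT).
rewrite /Delta /state_law.
apply: (norm_wsum_le (fun s : 'I_C.+1 => mu_ge0 s) mu_sum1) => s.
exact: bellman_error_le (ltnSE (ltn_ord s)) t_range.
Qed.
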